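(* Let $S=(\mathcal{E},\Sigma,X,\mathcal{O})$ be an entity, $e\in\mathcal{E}$ and $p\in\Sigma$. Then $\mathcal{Y}_{orth}\subseteq\mathcal{Y}_{eig}$, $\mathcal{F}_{orth}(e)\subseteq\mathcal{F}_{eig}(e)$ and $\mathcal{G}_{orth}(p)\subseteq\mathcal{G}_{eig}(p)$.
   Context: An entity $S=(\mathcal{E},\Sigma,X,\mathcal{O})$ consists of sets $\mathcal{E},\Sigma$ and for each $e\in\mathcal{E},p\in\Sigma$ a nonempty set $O(e,p)$, with $X=\bigcup O(e,p)$; $O(e)=\bigcup_pO(e,p)$, $O(p)=\bigcup_eO(e,p)$. Eigen systems: $eig:\mathcal{P}(X)\to\mathcal{P}(\mathcal{E}\times\Sigma)$, $(e,p)\in eig(A)\iff O(e,p)\subseteq A$, $\mathcal{Y}_{eig}=\{eig(A):A\subseteq X\}$; $eig_e:\mathcal{P}(O(e))\to\mathcal{P}(\Sigma)$, $q\in eig_e(A)\iff O(e,q)\subseteq A$, $\mathcal{F}_{eig}(e)=\{eig_e(A):A\subseteq O(e)\}$; $eig_p:\mathcal{P}(O(p))\to\mathcal{P}(\mathcal{E})$, $f\in eig_p(A)\iff O(f,p)\subseteq A$, $\mathcal{G}_{eig}(p)=\{eig_p(A):A\subseteq O(p)\}$. Orthogonalities: $(e,p)\perp(f,q)$ iff $O(e,p)\cap O(f,q)=\emptyset$ on $\mathcal{E}\times\Sigma$; $q\perp_e r$ iff $O(e,q)\cap O(e,r)=\emptyset$ on $\Sigma$; $f\perp_p g$ iff $O(f,p)\cap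 O(g,p)=\emptyset$ on $\mathcal{E}$. For an orthogonality relation $\perp$ on a set $Z$ and $K\subseteq Z$, $K^\perp=\{a\in Z: a\perp b\text{ for all }b\in K\}$; a set $K$ is ortho closed iff $K=(K^\perp)^\perp$. $\mathcal{Y}_{orth}$, $\mathcal{F}_{orth}(e)$, $\mathcal{G}_{orth}(p)$ denote the collections of ortho closed subsets of $\mathcal{E}\times\Sigma$, $\Sigma$, $\mathcal{E}$ with respect to $\perp$, $\perp_e$, $\perp_p$ respectively. *)

Definition set (T : Type) := T -> Prop.
Definition set_eq {T} (A B : set T) : Prop := forall x, A x <-> B x.
Definition subset {T} (A B : set T) : Prop := forall x, A x -> B x.

Record entity := {
  Ent : Type;
  Sig : Type;
  Xs  : Type;
  O   : Ent -> Sig -> set Xs;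
  O_nonempty : forall e p, exists x, O e p x;
  X_union : forall x, exists e p, O e p x
}.

Section Ent.
Variable S : entity.
Local Notation E := (Ent S).
Local Notation Sg := (Sig S).
Local Notation X := (Xs S).
Local Notation O := (O S).

Definition Oe (e : E) : set X := fun x => exists p, O e p x.
Definition Op (p : Sg) : set X := fun x => exists e, O e p x.

Definition eig (A : set X) : set (E * Sg) := fun ep => subset (O (fst ep) (snd ep)) A.
Definition eig_e (e : E) (A : set X) : set Sg := fun q => subset (O e q) A.
Definition eig_p (p : Sg) (A : set X) : set E := fun f => subset (O f p) A.

Definition Y_eig : set (set (E * Sg)) :=
  fun K => exists A : set X, set_eq K (eig A).
Definition F_eig (e : E) : set (set Sg) :=
  fun K => exists A : set X, subset A (Oe e) /\ set_eq K (eig_e e A).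
Definition G_eig (p : Sg) : set (set E) :=
  fun K => exists A : set X, subset A (Op p) /\ set_eq K (eig_p p A).

Definition disjoint (A B : set X) : Prop := forall x, A x -> B x -> False.
Definition orth (a b : E * Sg) : Prop := disjoint (O (fst a) (snd a)) (O (fst b) (snd b)).
Definition orth_e (e : E) (q r : Sg) : Prop := disjoint (O e q) (O e r).
Definition orth_p (p : Sg) (f g : E) : Prop := disjoint (O f p) (O g p).

End Ent.

Definition perp {Z : Type} (R : Z -> Z -> Prop) (K : set Z) : set Z :=
  fun a => forall b, K b -> R a b.
Definition ortho_closed {Z : Type} (R : Z -> Z -> Prop) (K : set Z) : Prop :=
  set_eq K (perp R (perp R K)).

Definition Y_orth (S : entity) : set (set (Ent S * Sig S)) := ortho_closed (@orth S).
Definition F_orth (S : entity) (e : Ent S) : set (set (Sig S)) := ortho_closed (orth_e S e).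
Definition G_orth (S : entity) (p : Sig S) : set (set (Ent S)) := ortho_closed (orth_p S p).


(* All three orthogonalities are disjointness of outcome sets [U z].  For such
   a relation the orthogonal of any family [L] is the eigen set of the
   complement of the union of the [U b], [b] in [L].  Hence an ortho closed
   [K = (K^perp)^perp] is an eigen set, and intersecting the witnessing set
   with the union of all [U z] does not change its eigen set. *)

Section OutcomeFamily.
Context {X Z : Type} (U : Z -> set X).

Definition family_orth (a b : Z) : Prop := forall x, U a x -> U b x -> False.
Definition family_eig (A : set X) : set Z := fun z => subset (U z) A.
Definition family_cover : set X := fun x => exists z, U z x.
Definition family_avoided (L : set Z) : set X := fun x => forall b, L b -> ~ U b x.

Lemma perp_family_orth (L : set Z) :
  set_eq (perp family_orth L) (family_eig (family_avoided L)).
Proof.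
  intro a; split.
  - intros Ha x Hax b Hb Hbx; exact (Ha b Hb x Hax Hbx).
  - intros Ha b Hb x Hax Hbx; exact (Ha x Hax b Hb Hbx).
Qed.

Lemma family_eig_setI_cover (A : set X) :
  set_eq (family_eig A) (family_eig (fun x => family_cover x /\ A x)).
Proof.
  intro a; split.
  - intros Ha x Hax; split; [exists a; exact Hax | exact (Ha x Hax)].
  - intros Ha x Hax; exact (proj2 (Ha x Hax)).
Qed.

Lemma ortho_closed_family_eig (K : set Z) :
  ortho_closed family_orth K ->
  exists A, subset A family_cover /\ set_eq K (family_eig A).
Proof.
  intro HK.
  exists (fun x => family_cover x /\ family_avoided (perp family_orth K) x).
  split; [intros x [Hx _]; exact Hx |].
  intro a.
  apply (iff_trans (HK a)), (iff_trans (perp_family_orth _ a)).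
  apply family_eig_setI_cover.
Qed.

End OutcomeFamily.

Theorem mainTheorem6 (S : entity) (e : Ent S) (p : Sig S) :
  subset (Y_orth S) (Y_eig S) /\
  subset (F_orth S e) (F_eig S e) /\
  subset (G_orth S p) (G_eig S p).
Proof.
  split; [| split]; intros K HK.
  - destruct (ortho_closed_family_eig
                (fun ep => O S (fst ep) (snd ep)) K HK) as [A [_ HA]].
    exists A; exact HA.
  - exact (ortho_closed_family_eig (O S e) K HK).
  - exact (ortho_closed_family_eig (fun f => O S f p) K HK).
Qed.
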